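(* Let $\tau$ be a tau-function of the extended bigraded Toda hierarchy with wave operators $W,\bar W$. For a difference operator $a$ commuting with $L$ and a function $h(s,\mathbf t,\bar{\mathbf t},\mathbf x)$, say that $(a,h)$ satisfies the ASvM relations if $$-\frac{(a_-W)z^s}{Wz^s}=G(z)\frac h\tau-\frac h\tau,\qquad \frac{(a_+\bar W)z^s}{\bar Wz^s}=\bar G(z)\frac h\tau-\frac h\tau.$$ Then for every $n\ge1$ and $p\ge0$ the pairs $(L^{\frac nk},\partial_{t_n}\tau)$, $(L^{\frac nm},\partial_{\bar t_n}\tau)$, $(2L^p\log L,\partial_{x_p}\tau)$ and $(L^0,s\tau)$ satisfy the ASvM relations (here $\partial_{x_0}=\partial_s$ and $L^0=1$). Equivalently, the induced vector fields on tau-functions are $\partial_{t_n}$, $\partial_{\bar t_n}$, $\partial_{x_p}$ and multiplication by $x_0=s$, up to adding a function from $\mathcal F$.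
   Context: Let $s$ be a variable, $\Lambda$ the shift $(\Lambda f)(s)=f(s+1)$, $\mathcal A$ the space of formal difference operators $\sum_{i\in\mathbb Z}a_i(s)\Lambda^i$, $A_+=\sum_{i\ge0}a_i\Lambda^i$, $A_-=\sum_{i<0}a_i\Lambda^i$, products $(a(s)\Lambda^i)(b(s)\Lambda^j)=a(s)b(s+i)\Lambda^{i+j}$ where defined; operators act on $z^s$ by $(a(s)\Lambda^i\partial_s^j)z^s=a(s)z^i(\log z)^jz^s$. Fix $k,m\ge1$. Variables: $s=x_0$, $\mathbf x=(x_1,\dots)$, $\mathbf t=(t_1,\dots)$, $\bar{\mathbf t}=(\bar t_1,\dots)$, where $t_{nk}$ and $\bar t_{nm}$ are distinct variables. Let $[z]=(z,z^2/2,z^3/3,\dots)$; for a function $g(s,\mathbf t,\bar{\mathbf t},\mathbf x)$ put $G(z)g=g(s,\mathbf t-[z^{-1}],\bar{\mathbf t},\mathbf x)$, $\bar G(z)g=g(s+1,\mathbf t,\bar{\mathbf t}+[z],\mathbf x)$. A tau-function of the EBTH is a function $\tau(s,\mathbf t,\bar{\mathbf t},\mathbf x)$ such that, writing $G(z)\tau/\tau=1+\sum_{i\ge1}w_iz^{-i}$ and $\bar G(z)\tau/\tau=\sum_{i\ge0}\bar w_iz^i$, the wave operators $W=1+\sum_{i\ge1}w_i\Lambda^{-i}$, $\bar W=\sum_{i\ge0}\bar w_i\Lambda^i$ ($\bar w_0\ne0$) satisfy $W\Lambda^kW^{-1}=\bar W\Lambda^{-m}\bar W^{-1}=:L$, $L=\Lambda^k+u_{k-1}\Lambda^{k-1}+\dots+u_{-m}\Lambda^{-m}$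 ($u_{-m}\ne0$), and the EBTH flows $\partial_{t_n}W=-(L^{\frac nk})_-W$, $\partial_{t_n}\bar W=(L^{\frac nk})_+\bar W$, $\partial_{\bar t_n}W=-(L^{\frac nm})_-W$, $\partial_{\bar t_n}\bar W=(L^{\frac nm})_+\bar W$ ($n\ge1$), $\partial_{x_n}W=-(2L^n\log L)_-W$, $\partial_{x_n}\bar W=(2L^n\log L)_+\bar W$ ($n\ge0$). Here for $n\in\mathbb Z$, $L^{\frac nk}:=W\Lambda^nW^{-1}$, $L^{\frac nm}:=\bar W\Lambda^{-n}\bar W^{-1}$, and $\log L=\frac12W\partial_sW^{-1}-\frac12\bar W\partial_s\bar W^{-1}$. $\mathcal F$ is the space of functions $f(s,\mathbf x)$ with $f(s+1,\mathbf x)=f(s,\mathbf x)$. *)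

From HB Require Import structures.
From mathcomp Require Import all_boot all_order all_algebra.
Set Implicit Arguments. Unset Strict Implicit. Unset Printing Implicit Defensive.
Import Order.TTheory GRing.Theory Num.Theory.
Local Open Scope ring_scope.

(* The independent variables:  VT n = t_n (n >= 1),  VTb n = \bar t_n (n >= 1),
   VX p = x_p (p >= 0), with x_0 = s. *)
Inductive var := VT of nat | VTb of nat | VX of nat.

(* A ring of "functions g(s, t, tbar, x)": the shift s |-> s+1 (sh, inverse shi),
   the partial derivatives der v = d/dv, and the coordinate function s. *)
Record ebth_data (A : comUnitRingType) := EbthData {
  sh : A -> A; shi : A -> A; der : var -> A -> A; svar : A }.

Record ebth_axioms (A : comUnitRingType) (D : ebth_data A) : Prop := {
  sh_add : forall a b, sh D (a + b) = sh D a + sh D b;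
  sh_mul : forall a b, sh D (a * b) = sh D a * sh D b;
  sh_one : sh D 1 = 1;
  sh_shiK : cancel (sh D) (shi D);
  shi_shK : cancel (shi D) (sh D);
  der_add : forall v a b, der D v (a + b) = der D v a + der D v b;
  der_mul : forall v a b, der D v (a * b) = der D v a * b + a * der D v b;
  der_comm : forall v w a, der D v (der D w a) = der D w (der D v a);
  der_sh : forall v a, der D v (sh D a) = sh D (der D v a);
  sh_svar : sh D (svar D) = svar D + 1;
  der_svar_s : der D (VX 0) (svar D) = 1;
  der_svar_other : forall v, v <> VX 0 -> der D v (svar D) = 0;
  nat_unit : forall n : nat, (n.+1)%:R \is a @GRing.unit A }.

Section Defs.
End Defs.

Definition shz (A : comUnitRingType) (D : ebth_data A) (i : int) (a : A) : A :=
  match i with Posz n => iter n (sh D) a | Negz n => iter n.+1 (shi D) a end.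

(* formal difference operators  sum_i P(i) Lambda^i  *)
Definition op (A : comUnitRingType) := int -> A.

Definition lam (A : comUnitRingType) (n : int) : op A :=
  fun l => if l == n then 1 else 0.

(* product of operators supported in (-oo, N1] and (-oo, N2] *)
Definition mul_lo (A : comUnitRingType) (D : ebth_data A) (N1 N2 : int)
  (P Q : op A) : op A := fun l =>
  if l <= N1 + N2 then
    \sum_(j < (absz (N1 + N2 - l)%R).+1)
       P (N1 - (j : nat)%:Z) * shz D (N1 - (j : nat)%:Z) (Q (l - (N1 - (j : nat)%:Z)))
  else 0.

(* product of operators supported in [M1, +oo) and [M2, +oo) *)
Definition mul_up (A : comUnitRingType) (D : ebth_data A) (M1 M2 : int)
  (P Q : op A) : op A := fun l =>
  if M1 + M2 <= l then
    \sum_(j < (absz (l - M1 - M2)%R).+1)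
       P (M1 + (j : nat)%:Z) * shz D (M1 + (j : nat)%:Z) (Q (l - (M1 + (j : nat)%:Z)))
  else 0.

Definition negp (A : comUnitRingType) (P : op A) : op A :=
  fun l => if l < 0 then P l else 0.
Definition posp (A : comUnitRingType) (P : op A) : op A :=
  fun l => if 0 <= l then P l else 0.
Definition dcoef (A : comUnitRingType) (d : A -> A) (P : op A) : op A :=
  fun l => d (P l).

(* g_0 = c_0^-1, g_i = - c_0^-1 sum_{j=1}^i c_j (tw j (g_{i-j})) : coefficients
   of the (right) inverse of sum c_i X^i when X c = (tw 1 c) X. *)
Fixpoint inv_aux (A : comUnitRingType) (c : nat -> A) (tw : nat -> A -> A)
  (n : nat) : seq A :=
  match n with
  | 0 => [:: (c 0%N)^-1]
  | n'.+1 => let prev := inv_aux c tw n' in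
      rcons prev (- (c 0%N)^-1 *
        \sum_(j < n'.+1) c j.+1 * tw j.+1 (nth 0 prev (n' - j)))
  end.
Definition seq_inv (A : comUnitRingType) (c : nat -> A) (tw : nat -> A -> A)
  (i : nat) : A := nth 0 (inv_aux c tw i) i.

Definition fps_mul (A : comUnitRingType) (f g : nat -> A) (i : nat) : A :=
  \sum_(j < i.+1) f j * g (i - j)%N.
Definition fps_inv (A : comUnitRingType) (f : nat -> A) : nat -> A :=
  seq_inv f (fun _ x => x).

(* coefficients E_N of exp(sum_{j>=1} u^j d_j / j) applied to g:
   E_0 g = g,  N E_N g = sum_{j=1}^N d_j (E_{N-j} g). *)
Fixpoint exp_aux (A : comUnitRingType) (d : nat -> A -> A) (g : A) (n : nat)
  : seq A :=
  match n with
  | 0 => [:: g]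
  | n'.+1 => let prev := exp_aux d g n' in
      rcons prev ((n'.+1)%:R^-1 * \sum_(j < n'.+1) d j.+1 (nth 0 prev (n' - j)))
  end.
Definition exp_ser (A : comUnitRingType) (d : nat -> A -> A) (g : A) (N : nat)
  : A := nth 0 (exp_aux d g N) N.

(* G(z) g = g(s, t - [z^-1], tbar, x) = sum_N Gser g N z^-N  (Taylor expansion)
   Gbar(z) g = g(s+1, t, tbar + [z], x) = sum_N Gbser g N z^N *)
Definition Gser (A : comUnitRingType) (D : ebth_data A) (g : A) (N : nat) : A :=
  exp_ser (fun j a => - der D (VT j) a) g N.
Definition Gbser (A : comUnitRingType) (D : ebth_data A) (g : A) (N : nat) : A :=
  sh D (exp_ser (fun j a => der D (VTb j) a) g N).

(* wave operators of tau:  G(z)tau/tau = sum w_i z^-i, Gbar(z)tau/tau = sum wb_i z^i *)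
Definition wco (A : comUnitRingType) (D : ebth_data A) (tau : A) (i : nat) : A :=
  Gser D tau i * tau^-1.
Definition wbco (A : comUnitRingType) (D : ebth_data A) (tau : A) (i : nat) : A :=
  Gbser D tau i * tau^-1.

Definition Wop (A : comUnitRingType) (D : ebth_data A) (tau : A) : op A :=
  fun l => if l <= 0 then wco D tau (absz l) else 0.
Definition Winvop (A : comUnitRingType) (D : ebth_data A) (tau : A) : op A :=
  fun l => if l <= 0 then
    seq_inv (wco D tau) (fun j => shz D (- (j%:Z))) (absz l) else 0.
Definition Wbop (A : comUnitRingType) (D : ebth_data A) (tau : A) : op A :=
  fun l => if 0 <= l then wbco D tau (absz l) else 0.
Definition Wbinvop (A : comUnitRingType) (D : ebth_data A) (tau : A) : op A :=
  fun l => if 0 <= l then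
    seq_inv (wbco D tau) (fun j => shz D (j%:Z)) (absz l) else 0.

(* L^{n/k} := W Lambda^n W^-1,  L^{n/m} := Wbar Lambda^-n Wbar^-1 *)
Definition Lk (A : comUnitRingType) (D : ebth_data A) (tau : A) (n : nat) : op A :=
  mul_lo D n%:Z 0 (mul_lo D 0 n%:Z (Wop D tau) (lam A n%:Z)) (Winvop D tau).
Definition Lm (A : comUnitRingType) (D : ebth_data A) (tau : A) (n : nat) : op A :=
  mul_up D (- n%:Z) 0 (mul_up D 0 (- n%:Z) (Wbop D tau) (lam A (- n%:Z)))
    (Wbinvop D tau).

(* L^p, with L = W Lambda^k W^-1 *)
Fixpoint Lpow (A : comUnitRingType) (D : ebth_data A) (tau : A) (k p : nat)
  : op A :=
  match p with
  | 0 => lam A 0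
  | p'.+1 => mul_lo D k%:Z (p' * k)%N%:Z (Lk D tau k) (Lpow D tau k p')
  end.

(* log L = 1/2 W d_s W^-1 - 1/2 Wbar d_s Wbar^-1.  Since
   W d_s W^-1 = d_s + W (d_s W^-1) (coefficientwise derivative of W^-1), the
   d_s terms cancel and log L = logLlo + logLup with: *)
Definition logLlo (A : comUnitRingType) (D : ebth_data A) (tau : A) : op A :=
  fun l => 2^-1 * mul_lo D 0 0 (Wop D tau) (dcoef (der D (VX 0)) (Winvop D tau)) l.
Definition logLup (A : comUnitRingType) (D : ebth_data A) (tau : A) : op A :=
  fun l => - (2^-1 * mul_up D 0 0 (Wbop D tau)
                        (dcoef (der D (VX 0)) (Wbinvop D tau)) l).

Definition LplogL2 (A : comUnitRingType) (D : ebth_data A) (tau : A)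
  (k m p : nat) : op A := fun l =>
  2 * (mul_lo D (p * k)%N%:Z 0 (Lpow D tau k p) (logLlo D tau) l
       + mul_up D (- (p * m)%N%:Z) 0 (Lpow D tau k p) (logLup D tau) l).

Definition is_tau (A : comUnitRingType) (D : ebth_data A) (k m : nat) (tau : A)
  : Prop :=
  [/\ tau \is a GRing.unit,
      (forall l, Lk D tau k l = Lm D tau m l)
      /\ Lk D tau k k%:Z = 1
      /\ (forall l, (l < - m%:Z) || (k%:Z < l) -> Lk D tau k l = 0)
      /\ Lk D tau k (- m%:Z) != 0,
      (forall n, (0 < n)%N -> forall l,
         dcoef (der D (VT n)) (Wop D tau) l
           = - mul_lo D (-1) 0 (negp (Lk D tau n)) (Wop D tau) l
         /\ dcoef (der D (VT n)) (Wbop D tau) l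
           = mul_up D 0 0 (posp (Lk D tau n)) (Wbop D tau) l),
      (forall n, (0 < n)%N -> forall l,
         dcoef (der D (VTb n)) (Wop D tau) l
           = - mul_lo D (-1) 0 (negp (Lm D tau n)) (Wop D tau) l
         /\ dcoef (der D (VTb n)) (Wbop D tau) l
           = mul_up D 0 0 (posp (Lm D tau n)) (Wbop D tau) l)
    & (forall p l,
         dcoef (der D (VX p)) (Wop D tau) l
           = - mul_lo D (-1) 0 (negp (LplogL2 D tau k m p)) (Wop D tau) l
         /\ dcoef (der D (VX p)) (Wbop D tau) l
           = mul_up D 0 0 (posp (LplogL2 D tau k m p)) (Wbop D tau) l)].

Definition ASvM (A : comUnitRingType) (D : ebth_data A) (tau : A) (a : op A)
  (h : A) : Prop :=
  let r := h * tau^-1 in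
  (forall i : nat,
     fps_mul (fun j => - mul_lo D (-1) 0 (negp a) (Wop D tau) (- j%:Z))
             (fps_inv (wco D tau)) i
     = Gser D r i - (if i == 0%N then r else 0))
  /\ (forall i : nat,
     fps_mul (fun j => mul_up D 0 0 (posp a) (Wbop D tau) j%:Z)
             (fps_inv (wbco D tau)) i
     = Gbser D r i - (if i == 0%N then r else 0)).

(* The Taylor shifts G(z) = exp(- sum_j z^-j d_{t_j} / j) and
   Gbar(z) = Lambda exp(sum_j z^j d_{tbar_j} / j) are ring homomorphisms into
   power series that commute with every d_v.  Since W z^s / z^s = G(z)tau / tau,
   for a derivation d_v the ratio (d_v W z^s) / (W z^s) is the logarithmic
   derivative d_v log (G(z)tau / tau) = G(z)(d_v tau / tau) - d_v tau / tau, and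
   the flow equations identify d_v W with -(a_-)W for the operator a driving d_v
   (similarly for Wbar).  For (1, s tau) one has a_- = 0, a_+ = 1, G(z)s = s and
   Gbar(z)s = s + 1.  Multiplicativity of exp is the Leibniz rule: the Euler
   operator f |-> N f_N and the convolution f |-> sum_j d_j f_(N-j) are both
   derivations of the Cauchy product, and they agree on the coefficients of
   exp(sum_j u^j d_j / j) g. *)
From HB Require Import structures.
From mathcomp Require Import all_boot all_order all_algebra.
From mathcomp Require Import ring zify.
Set Implicit Arguments.
Unset Strict Implicit.
Unset Printing Implicit Defensive.
Import Order.TTheory GRing.Theory Num.Theory.
Local Open Scope ring_scope.

Section TriangularSums.
Variable A : comUnitRingType.

Lemma sum_triangle_exchange (F : nat -> nat -> A) N :
  \sum_(j < N.+1) \sum_(i < (N - j).+1) F j i =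
  \sum_(i < N.+1) \sum_(j < (N - i).+1) F j i.
Proof.
have square (G : nat -> nat -> A) :
    \sum_(j < N.+1) \sum_(i < (N - j).+1) G j i =
    \sum_(j < N.+1) \sum_(i < N.+1) (if (j + i <= N)%N then G j i else 0).
  apply: eq_bigr => j _.
  rewrite (big_ord_widen N.+1 (G j)) ?ltnS ?leq_subr // big_mkcond.
  apply: eq_bigr => i _; have := ltn_ord j => lt_j.
  by have -> : (i < (N - j).+1)%N = (j + i <= N)%N by lia.
rewrite square (square (fun i j => F j i)) exchange_big /=.
by apply: eq_bigr => i _; apply: eq_bigr => j _; rewrite addnC.
Qed.

Lemma sum_triangle_reindex (F : nat -> nat -> A) N :
  \sum_(j < N.+1) \sum_(i < (N - j).+1) F j (j + i)%N =
  \sum_(k < N.+1) \sum_(j < k.+1) F j k.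
Proof.
have -> : \sum_(k < N.+1) \sum_(j < k.+1) F j k =
    \sum_(k < N.+1) \sum_(j < N.+1) (if (j <= k)%N then F j k else 0).
  by apply: eq_bigr => k _; rewrite (big_ord_widen N.+1 (F^~ k)) ?big_mkcond.
rewrite exchange_big /=; apply: eq_bigr => j _.
rewrite -big_mkcond (eq_bigl (fun k : 'I_N.+1 => predT (k : nat) && (j <= k)%N)) //.
rewrite -big_geq_mkord; have := big_addn 0 N.+1 j predT (F j).
rewrite add0n => ->; rewrite big_mkord subSn; last by rewrite -ltnS.
by apply: eq_bigr => i _; rewrite addnC.
Qed.

End TriangularSums.

Section AdditiveMap.
Variables (U V : zmodType) (f : U -> V).
Hypothesis fD : {morph f : a b / a + b}.

Lemma add_morph0 : f 0 = 0.
Proof. by apply: (@addrI _ (f 0)); rewrite -fD !addr0. Qed.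

Lemma add_morphN a : f (- a) = - f a.
Proof. by apply: (@addrI _ (f a)); rewrite -fD !subrr add_morph0. Qed.

Lemma add_morph_sum (I : Type) (r : seq I) (P : pred I) (F : I -> U) :
  f (\sum_(i <- r | P i) F i) = \sum_(i <- r | P i) f (F i).
Proof. exact: (big_morph f fD add_morph0). Qed.

End AdditiveMap.

Section Derivation.
Variables (A : comUnitRingType) (e : A -> A).
Hypothesis eM : forall a b, e (a * b) = e a * b + a * e b.

Lemma derivation1 : e 1 = 0.
Proof. by apply: (@addrI _ (e 1)); rewrite addr0 -{3}(mulr1 1) eM mulr1 mul1r. Qed.

Lemma derivationV a : a \is a GRing.unit -> e a^-1 = - (a^-1 * e a * a^-1).
Proof.
move=> ua; have := derivation1; rewrite -(mulVr ua) eM => /eqP.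
rewrite addr_eq0 => /eqP eVa.
by rewrite -[e a^-1](mulrK ua) eVa mulNr mulrAC.
Qed.

Hypothesis eD : {morph e : a b / a + b}.

Lemma derivation_nat n : e n%:R = 0.
Proof.
elim: n => [|n IHn]; first exact: add_morph0.
by rewrite -addn1 natrD eD IHn derivation1 addr0.
Qed.

Lemma derivation_natV n : n%:R \is a @GRing.unit A -> e n%:R^-1 = 0.
Proof. by move=> un; rewrite derivationV // derivation_nat mulr0 mul0r oppr0. Qed.

End Derivation.

Section PowerSeries.
Variable A : comUnitRingType.

Definition euler (f : nat -> A) (N : nat) : A := N%:R * f N.

Lemma fps_mul_ext (f f' g g' : nat -> A) N :
  (forall i, (i <= N)%N -> f i = f' i) -> (forall i, (i <= N)%N -> g i = g' i) ->
  fps_mul f g N = fps_mul f' g' N.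
Proof.
move=> eq_f eq_g; apply: eq_bigr => i _.
by rewrite eq_f ?eq_g ?leq_subr // -ltnS.
Qed.

Lemma euler_fps_mul (f g : nat -> A) N :
  euler (fps_mul f g) N = fps_mul (euler f) g N + fps_mul f (euler g) N.
Proof.
rewrite /euler /fps_mul mulr_sumr -big_split; apply: eq_bigr => i _ /=.
rewrite -{1}(subnKC (ltnSE (ltn_ord i))) natrD; ring.
Qed.

End PowerSeries.

Section ExpSeries.
Variables (A : comUnitRingType) (d : nat -> A -> A).

Lemma size_exp_aux g n : size (exp_aux d g n) = n.+1.
Proof. by elim: n => //= n IHn; rewrite size_rcons IHn. Qed.

Lemma nth_exp_aux g n i : (i <= n)%N -> nth 0 (exp_aux d g n) i = exp_ser d g i.
Proof.
elim: n => [|n IHn]; first by rewrite leqn0 => /eqP ->.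
rewrite leq_eqVlt => /orP[/eqP -> // | lt_in].
by rewrite /= nth_rcons size_exp_aux lt_in IHn.
Qed.

Lemma exp_serS g N :
  exp_ser d g N.+1 = N.+1%:R^-1 * \sum_(j < N.+1) d j.+1 (exp_ser d g (N - j)).
Proof.
rewrite /exp_ser /= nth_rcons size_exp_aux ltnn eqxx.
by congr (_ * _); apply: eq_bigr => j _; rewrite nth_exp_aux // leq_subr.
Qed.

Definition dconv (f : nat -> A) (N : nat) : A :=
  \sum_(j < N) d j.+1 (f (N - j.+1)%N).

Lemma dconv_ext (f f' : nat -> A) N :
  (forall i, (i < N)%N -> f i = f' i) -> dconv f N = dconv f' N.
Proof.
move=> eq_f; apply: eq_bigr => j _; rewrite eq_f //.
by have := ltn_ord j; lia.
Qed.

Hypothesis dD : forall j, {morph d j : a b / a + b}.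
Hypothesis dM : forall j a b, d j (a * b) = d j a * b + a * d j b.

Lemma dconv_fps_mul f g N :
  dconv (fps_mul f g) N = fps_mul (dconv f) g N + fps_mul f (dconv g) N.
Proof.
case: N => [|N]; first by rewrite /fps_mul /dconv !big_ord1 !big_ord0 mul0r mulr0 addr0.
rewrite /dconv /fps_mul.
transitivity (\sum_(j < N.+1) \sum_(i < (N - j).+1)
    (d j.+1 (f i) * g (N - j - i)%N + f i * d j.+1 (g (N - j - i)%N))).
  by apply: eq_bigr => j _; rewrite subSS add_morph_sum //; apply: eq_bigr.
under eq_bigr do rewrite big_split /=.
rewrite big_split /=; congr (_ + _).
  rewrite [RHS]big_ord_recl big_ord0 mul0r add0r.
  under [RHS]eq_bigr => k _.
    rewrite lift0 subSS mulr_suml.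
    under eq_bigr do rewrite subSS.
    over.
  rewrite -(sum_triangle_reindex (fun j k => d j.+1 (f (k - j)%N) * g (N - k)%N)).
  by apply: eq_bigr => j _; apply: eq_bigr => i _; rewrite addKn subnDA.
rewrite [RHS]big_ord_recr /= subnn big_ord0 mulr0 addr0.
rewrite (sum_triangle_exchange (fun j i => f i * d j.+1 (g (N - j - i)%N))).
apply: eq_bigr => i _; rewrite mulr_sumr subSn; last by rewrite -ltnS.
by apply: eq_bigr => j _; rewrite subSS subnAC.
Qed.

Hypothesis nU : forall n : nat, n.+1%:R \is a @GRing.unit A.

Lemma euler_exp_ser g N : euler (exp_ser d g) N = dconv (exp_ser d g) N.
Proof.
case: N => [|N]; first by rewrite /euler /dconv big_ord0 mul0r.
by rewrite /euler exp_serS mulrA mulrV ?mul1r.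
Qed.

Lemma exp_ser_mul a b N :
  exp_ser d (a * b) N = fps_mul (exp_ser d a) (exp_ser d b) N.
Proof.
elim/ltn_ind: N => -[_|N IHN]; first by rewrite /fps_mul big_ord1.
apply: (mulrI (nU N)); rewrite -[LHS]/(euler (exp_ser d (a * b)) N.+1) euler_exp_ser.
rewrite (@dconv_ext _ (fps_mul (exp_ser d a) (exp_ser d b))) //.
rewrite dconv_fps_mul -[RHS]/(euler (fps_mul (exp_ser d a) (exp_ser d b)) N.+1) euler_fps_mul.
by congr (_ + _); apply: fps_mul_ext => i _; rewrite ?euler_exp_ser.
Qed.

Lemma exp_ser_const g : (forall j, d j g = 0) ->
  forall N, exp_ser d g N = if N == 0%N then g else 0.
Proof.
move=> dg0; elim/ltn_ind => -[//|N] IHN.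
rewrite exp_serS big1 ?mulr0 // => j _.
rewrite IHN ?ltnS ?leq_subr //; case: eqP => _; rewrite ?dg0 ?add_morph0 //.
Qed.

Lemma exp_ser_comm (e : A -> A) :
  {morph e : a b / a + b} -> (forall a b, e (a * b) = e a * b + a * e b) ->
  (forall j a, e (d j a) = d j (e a)) ->
  forall g N, e (exp_ser d g N) = exp_ser d (e g) N.
Proof.
move=> eD eM ed g; elim/ltn_ind => -[//|N] IHN.
rewrite !exp_serS eM derivation_natV // mul0r add0r add_morph_sum //.
by congr (_ * _); apply: eq_bigr => j _; rewrite ed IHN // ltnS leq_subr.
Qed.

End ExpSeries.

Section SeriesInverse.
Variable A : comUnitRingType.

Lemma size_inv_aux (c : nat -> A) tw n : size (inv_aux c tw n) = n.+1.
Proof. by elim: n => //= n IHn; rewrite size_rcons IHn. Qed.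

Lemma nth_inv_aux (c : nat -> A) tw n i :
  (i <= n)%N -> nth 0 (inv_aux c tw n) i = seq_inv c tw i.
Proof.
elim: n => [|n IHn]; first by rewrite leqn0 => /eqP ->.
rewrite leq_eqVlt => /orP[/eqP -> // | lt_in].
by rewrite /= nth_rcons size_inv_aux lt_in IHn.
Qed.

Lemma seq_invS (c : nat -> A) tw n : seq_inv c tw n.+1 =
  - (c 0%N)^-1 * \sum_(j < n.+1) c j.+1 * tw j.+1 (seq_inv c tw (n - j)).
Proof.
rewrite /seq_inv /= nth_rcons size_inv_aux ltnn eqxx.
by congr (_ * _); apply: eq_bigr => j _; rewrite nth_inv_aux // leq_subr.
Qed.

Lemma fps_inv_unique (c h : nat -> A) : c 0%N \is a GRing.unit ->
  (forall i, fps_mul c h i = if i == 0%N then 1 else 0) ->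
  forall i, h i = fps_inv c i.
Proof.
move=> uc ch1; elim/ltn_ind => -[_|n IHn].
  move: (ch1 0%N); rewrite /fps_mul big_ord1 /= => ch0.
  by rewrite -[h 0%N](mulKr uc) ch0 mulr1.
move: (ch1 n.+1); rewrite /fps_mul big_ord_recl /= subn0 => /eqP.
rewrite addr_eq0 => /eqP chS.
rewrite /fps_inv seq_invS -[h n.+1](mulKr uc) chS mulrN mulNr.
congr (- (_ * _)); apply: eq_bigr => j _.
by rewrite /bump leq0n add1n subSS IHn // ltnS leq_subr.
Qed.

End SeriesInverse.

Section LogarithmicDerivative.
Variables (A : comUnitRingType) (F : A -> nat -> A) (d : A -> A) (tau : A).
Hypothesis F_mul : forall a b i, F (a * b) i = fps_mul (F a) (F b) i.
Hypothesis F1 : forall i, F 1 i = if i == 0%N then 1 else 0.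
Hypothesis dD : {morph d : a b / a + b}.
Hypothesis dM : forall a b, d (a * b) = d a * b + a * d b.
Hypothesis dF : forall g i, d (F g i) = F (d g) i.
Hypothesis tau_unit : tau \is a GRing.unit.

Let w i := F tau i * tau^-1.

Lemma fps_inv_wave i : fps_inv w i = tau * F tau^-1 i.
Proof.
have w_mul i' : fps_mul w (fun j => tau * F tau^-1 j) i' = if i' == 0%N then 1 else 0.
  by rewrite -F1 -(divrr tau_unit) F_mul; apply: eq_bigr => j _; rewrite mulrA mulrVK.
have w0_unit : w 0%N \is a GRing.unit.
  apply/unitrP; exists (tau * F tau^-1 0%N).
  by move: (w_mul 0%N); rewrite /fps_mul big_ord1 /= => wh; rewrite mulrC wh.
by rewrite -(fps_inv_unique w0_unit w_mul).
Qed.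

Lemma fps_mul_wave_inv i : fps_mul w (fps_inv w) i = if i == 0%N then 1 else 0.
Proof.
rewrite -F1 -(divrr tau_unit) F_mul; apply: eq_bigr => j _.
by rewrite fps_inv_wave /w mulrA mulrVK.
Qed.

Lemma fps_mul_der_wave_inv i :
  fps_mul (fun j => d (w j)) (fps_inv w) i =
  F (d tau * tau^-1) i - (if i == 0%N then d tau * tau^-1 else 0).
Proof.
have dtauV := derivationV dM tau_unit.
transitivity (fps_mul (F (d tau)) (F tau^-1) i
              - d tau * tau^-1 * fps_mul (F tau) (F tau^-1) i).
  rewrite /fps_mul mulr_sumr -sumrB; apply: eq_bigr => j _.
  have tauVK : tau^-1 * tau = 1 by rewrite mulVr.
  rewrite fps_inv_wave /w dM dF dtauV; ring: tauVK.
rewrite -!F_mul divrr // F1.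
by case: eqP; rewrite ?mulr1 ?mulr0.
Qed.

End LogarithmicDerivative.

Section TaylorShifts.
Variables (A : comUnitRingType) (D : ebth_data A).
Hypothesis ax : ebth_axioms D.

Let negder_add j : {morph (fun a => - der D (VT j) a) : a b / a + b}.
Proof. by move=> a b /=; rewrite (der_add ax) opprD. Qed.

Let negder_mul j a b :
  - der D (VT j) (a * b) = - der D (VT j) a * b + a * - der D (VT j) b.
Proof. by rewrite (der_mul ax) opprD mulNr mulrN. Qed.

Lemma Gser_mul a b i : Gser D (a * b) i = fps_mul (Gser D a) (Gser D b) i.
Proof. exact: exp_ser_mul negder_add negder_mul (nat_unit ax) a b i. Qed.

Lemma Gbser_mul a b i : Gbser D (a * b) i = fps_mul (Gbser D a) (Gbser D b) i.
Proof.
rewrite /Gbser (exp_ser_mul (fun j => der_add ax (VTb j)) (fun j => der_mul ax (VTb j))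
  (nat_unit ax)).
rewrite (add_morph_sum (sh_add ax)); apply: eq_bigr => j _.
by rewrite (sh_mul ax).
Qed.

Lemma Gser_const g : (forall j, der D (VT j) g = 0) ->
  forall i, Gser D g i = if i == 0%N then g else 0.
Proof. by move=> g_cst; apply: exp_ser_const => // j; rewrite g_cst oppr0. Qed.

Lemma Gbser_const g : (forall j, der D (VTb j) g = 0) ->
  forall i, Gbser D g i = if i == 0%N then sh D g else 0.
Proof.
move=> g_cst i; rewrite /Gbser (exp_ser_const (fun j => der_add ax (VTb j))) //.
by case: eqP; rewrite ?(add_morph0 (sh_add ax)).
Qed.

Lemma Gser1 i : Gser D 1 i = if i == 0%N then 1 else 0.
Proof. by apply: Gser_const => j; apply: derivation1; apply: der_mul. Qed.

Lemma Gbser1 i : Gbser D 1 i = if i == 0%N then 1 else 0.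
Proof.
rewrite Gbser_const ?(sh_one ax) // => j.
by apply: derivation1; apply: der_mul.
Qed.

Lemma Gser_der v g i : der D v (Gser D g i) = Gser D (der D v g) i.
Proof.
apply: (@exp_ser_comm _ (fun j a => - der D (VT j) a) (nat_unit ax) _
  (der_add ax v) (der_mul ax v)) => j a.
by rewrite (add_morphN (der_add ax v)) (der_comm ax).
Qed.

Lemma Gbser_der v g i : der D v (Gbser D g i) = Gbser D (der D v g) i.
Proof.
rewrite /Gbser (der_sh ax); congr (sh D _).
apply: (@exp_ser_comm _ (fun j a => der D (VTb j) a) (nat_unit ax) _
  (der_add ax v) (der_mul ax v)) => j a.
exact: der_comm.
Qed.

End TaylorShifts.

Section IdentityOperator.
Variables (A : comUnitRingType) (D : ebth_data A).

Lemma mul_lo_negp_lam0 N1 N2 (Q : op A) l :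
  mul_lo D N1 N2 (negp (lam A 0)) Q l = 0.
Proof.
rewrite /mul_lo; case: ifP => // _; apply: big1 => j _.
by rewrite /negp /lam; case: ltgtP; rewrite mul0r.
Qed.

Lemma mul_up_posp_lam0 (Q : op A) (n : nat) :
  mul_up D 0 0 (posp (lam A 0)) Q n%:Z = Q n%:Z.
Proof.
rewrite /mul_up addr0 lez_nat big_ord_recl big1 ?addr0 => [|j _].
  by rewrite /posp /lam /= mul1r.
by rewrite /posp /lam lift0 /= mul0r.
Qed.

End IdentityOperator.

Section ASvMRelations.
Variables (A : comUnitRingType) (D : ebth_data A) (tau : A).
Hypothesis ax : ebth_axioms D.
Hypothesis tau_unit : tau \is a GRing.unit.

Lemma ASvM_flow v (a : op A) :
  (forall l, dcoef (der D v) (Wop D tau) l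
               = - mul_lo D (-1) 0 (negp a) (Wop D tau) l
          /\ dcoef (der D v) (Wbop D tau) l
               = mul_up D 0 0 (posp a) (Wbop D tau) l) ->
  ASvM D tau a (der D v tau).
Proof.
move=> flow; split=> i.
  rewrite -(fps_mul_der_wave_inv (@Gser_mul _ _ ax) (@Gser1 _ _ ax) (der_mul ax v)
            (@Gser_der _ _ ax v) tau_unit).
  apply: fps_mul_ext => j _ //.
  by rewrite -(proj1 (flow _)) /dcoef /Wop oppr_le0 abszN absz_nat.
rewrite -(fps_mul_der_wave_inv (@Gbser_mul _ _ ax) (@Gbser1 _ _ ax) (der_mul ax v)
          (@Gbser_der _ _ ax v) tau_unit).
by apply: fps_mul_ext => j _ //; rewrite -(proj2 (flow _)).
Qed.

Lemma ASvM_svar : ASvM D tau (lam A 0) (svar D * tau).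
Proof.
have svar_VT j : der D (VT j) (svar D) = 0 by apply: der_svar_other.
have svar_VTb j : der D (VTb j) (svar D) = 0 by apply: der_svar_other.
rewrite /ASvM mulrK //; split=> i.
  rewrite (Gser_const ax svar_VT) subrr /fps_mul big1 // => j _.
  by rewrite mul_lo_negp_lam0 oppr0 mul0r.
transitivity (fps_mul (wbco D tau) (fps_inv (wbco D tau)) i).
  by apply: fps_mul_ext => j _ //; rewrite mul_up_posp_lam0.
rewrite (fps_mul_wave_inv (@Gbser_mul _ _ ax) (@Gbser1 _ _ ax) tau_unit).
rewrite (Gbser_const ax svar_VTb) (sh_svar ax).
by case: i => [|i]; rewrite /= ?subr0 // addrAC subrr add0r.
Qed.

End ASvMRelations.

Theorem lemma4p2 (A : comUnitRingType) (D : ebth_data A) (k m : nat) (tau : A) :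
  ebth_axioms D -> (0 < k)%N -> (0 < m)%N -> is_tau D k m tau ->
  (forall n : nat, (0 < n)%N ->
     ASvM D tau (Lk D tau n) (der D (VT n) tau)
     /\ ASvM D tau (Lm D tau n) (der D (VTb n) tau))
  /\ (forall p : nat, ASvM D tau (LplogL2 D tau k m p) (der D (VX p) tau))
  /\ ASvM D tau (lam A 0) (svar D * tau).
Proof.
move=> ax _ _ [tau_unit _ flow_t flow_tb flow_x]; split; [|split].
- by move=> n n_gt0; split; apply: ASvM_flow => //; [exact: flow_t | exact: flow_tb].
- by move=> p; apply: ASvM_flow => //; exact: flow_x.
- exact: ASvM_svar.
Qed.
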